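(* In the setting of the previous statement, a necessary condition for the normal expansions of the fields $\phi^\alpha$ determined from the null data to be absolutely convergent in a neighbourhood of the origin $x=0$ is that there exist positive constants $M$, $r$ such that the null data satisfy $$|\mathcal C(D_{{\bf a}_p}\cdots D_{{\bf a}_1}\phi^\alpha)(q)|\le \frac{M\,p!}{r^p},\qquad p\ge0,\quad {\bf a}_p,\dots,{\bf a}_1=1,2,3,\quad \alpha=1,\dots,n.$$ In particular every real analytic solution of the field equations near $q$ has null data satisfying such estimates.
   Context: Field equations: on a 3-dimensional manifold $N$ with a negative definite metric $h$ (Levi-Civita connection $D$, Laplacian $\Delta_h$, Ricci tensor $R_{ab}[h]$) and $n$ scalar fields $\phi^\alpha$, $\alpha=1,\dots,n$: $$\Delta_h\phi^\alpha=f^\alpha(\phi^\gamma,D_c\phi^\gamma),\qquad R_{ab}[h]=F^\alpha(\phi^\gamma)D_aD_b\phi^\alpha+F^{\alpha\beta}(\phi^\gamma)D_a\phi^\alpha D_b\phi^\beta+f(\phi^\gamma,D_c\phi^\gamma)h_{ab},$$ with $F^\alpha,F^{\alpha\beta}=F^{\beta\alpha}$ real analytic in $\phi^\gamma$ and $f,f^\alpha$ real analytic scalar functions of $\phi^\gamma$ and $D_c\phi^\gamma$. $c_{\bf a}$ is an $h$-normal frame centred at $q$ (orthonormal, $h(c_{\bf a},c_{\bf b})=-\delta_{\bf ab}$, parallelly transported along geodesics through $q$), $x^a$ the associated normal coordinates. $\mathcal C$ denotes the symmetric trace-free part; the null data are $\mathcal C(D_{{\bf a}_p}\cdots D_{{\bf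 a}_1}\phi^\alpha)(q)$, $p\ge0$, and they determine (uniquely) the normal expansion coefficients $D_{{\bf a}_p}\cdots D_{{\bf a}_1}\phi^\alpha(q)$ of $\phi^\alpha(x)=\sum_p\frac1{p!}x^{b_p}\cdots x^{b_1}D_{{\bf b}_p}\cdots D_{{\bf b}_1}\phi^\alpha(q)$ via the field equations. *)

From Stdlib Require Import Reals Lra List Permutation Arith Factorial.
Import ListNotations.
Open Scope R_scope.

(* Index lists: a list [a_p; ...; a_1] with entries in {0,1,2} encodes the
   frame indices bold-a_p,...,bold-a_1 in {1,2,3} (shifted by one). *)
Definition valid_idx (p : nat) (l : list nat) : Prop :=
  length l = p /\ Forall (fun a => (a < 3)%nat) l.

Fixpoint idx (p : nat) : list (list nat) :=
  match p with
  | O => [[]]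
  | S q => flat_map (fun l => map (fun a => a :: l) [0%nat; 1%nat; 2%nat]) (idx q)
  end.

Definition sumR (s : list R) : R := fold_right Rplus 0 s.

(* A rank-p covariant tensor on R^3 is given by its frame components,
   a function on index lists (only values on valid lists of length p matter). *)
Definition tensor := list nat -> R.

Definition symmetric (p : nat) (U : tensor) : Prop :=
  forall l l', valid_idx p l -> valid_idx p l' -> Permutation l l' -> U l = U l'.

(* Trace-free w.r.t. h = -delta (sign irrelevant): all contractions of two
   slots vanish; by symmetry it suffices to contract the first two slots. *)
Definition trace_free (p : nat) (U : tensor) : Prop :=
  forall l, valid_idx (p - 2) l -> (2 <= p)%nat ->
    sumR (map (fun c => U (c :: c :: l)) [0%nat; 1%nat; 2%nat]) = 0.

Definition STF (p : nat) (U : tensor) : Prop := symmetric p U /\ trace_free p U.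

Definition inner (p : nat) (A B : tensor) : R :=
  sumR (map (fun l => A l * B l) (idx p)).

(* U is the symmetric trace-free part C(T) of the rank-p tensor T:
   the orthogonal projection of T onto the space of symmetric trace-free
   tensors (equivalently of the symmetrisation of T). *)
Definition is_C (p : nat) (T U : tensor) : Prop :=
  STF p U /\ (forall W, STF p W -> inner p (fun l => T l - U l) W = 0).

Definition monom (x : nat -> R) (l : list nat) : R :=
  fold_right (fun a acc => x a * acc) 1 l.

(* Sum of absolute values of the degree-p terms
   (1/p!) x^{b_p}...x^{b_1} T_{b_p...b_1} of the normal expansion. *)
Definition abs_term (T : tensor) (x : nat -> R) (p : nat) : R :=
  sumR (map (fun l => Rabs (/ INR (fact p) * monom x l * T l)) (idx p)).

Definition abs_conv_near0 (T : tensor) : Prop :=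
  exists rho, 0 < rho /\
    forall x : nat -> R, (forall i, (i < 3)%nat -> Rabs (x i) < rho) ->
      exists s, Un_cv (fun N => sum_f_R0 (abs_term T x) N) s.

(* The normal expansion converging absolutely at the point x = (c, c, c)
   bounds each of its degree-p terms, c^p / p! * sum_l |T l|, by the sum s of
   the series.  The null datum U = C(T) is the orthogonal projection of T onto
   the symmetric trace-free tensors, so |U|^2 = <T, U> <= (sum_l |T l|) |U| for
   the Frobenius norm, whence every component of U is bounded by s p! / c^p.
   Finitely many fields then share the constants max M and min r. *)

From Stdlib Require Import Reals List Permutation Arith Factorial Lra Lia.
Open Scope R_scope.

Lemma sumR_le {A} (f g : A -> R) (s : list A) :
  (forall x, In x s -> f x <= g x) -> sumR (map f s) <= sumR (map g s).
Proof.
  induction s as [|a s IH]; simpl; intros Hfg; [lra|].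
  assert (f a <= g a) by auto. assert (sumR (map f s) <= sumR (map g s)) by auto.
  lra.
Qed.

Lemma sumR_ge0 {A} (f : A -> R) (s : list A) :
  (forall x, In x s -> 0 <= f x) -> 0 <= sumR (map f s).
Proof.
  induction s as [|a s IH]; simpl; intros Hf; [lra|].
  assert (0 <= f a) by auto. assert (0 <= sumR (map f s)) by auto. lra.
Qed.

Lemma sumR_mull {A} (k : R) (f : A -> R) (s : list A) :
  sumR (map (fun x => k * f x) s) = k * sumR (map f s).
Proof. induction s; simpl; [ring | rewrite IHs; ring]. Qed.

Lemma sumR_sub {A} (f g : A -> R) (s : list A) :
  sumR (map (fun x => f x - g x) s) = sumR (map f s) - sumR (map g s).
Proof. induction s; simpl; [ring | rewrite IHs; ring]. Qed.

Lemma le_sumR_in {A} (f : A -> R) (s : list A) x :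
  (forall y, In y s -> 0 <= f y) -> In x s -> f x <= sumR (map f s).
Proof.
  induction s as [|a s IH]; simpl; intros Hf Hin; [contradiction|].
  destruct Hin as [->|Hin].
  - assert (0 <= sumR (map f s)) by (apply sumR_ge0; auto). lra.
  - assert (0 <= f a) by auto. assert (f x <= sumR (map f s)) by auto. lra.
Qed.

Lemma valid_idx_in_idx p l : valid_idx p l -> In l (idx p).
Proof.
  revert p; induction l as [|a l IH]; intros p [Hlen Hlt]; simpl in Hlen.
  - subst; simpl; auto.
  - subst p. inversion Hlt; subst. simpl. apply in_flat_map.
    exists l. split; [apply IH; split; auto|].
    simpl. destruct a as [|[|[|a]]]; auto; lia.
Qed.

Lemma in_idx_length p l : In l (idx p) -> length l = p.
Proof.
  revert l; induction p; simpl; intros l Hin.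
  - destruct Hin as [<-|[]]; auto.
  - apply in_flat_map in Hin as [l' [Hl' Hl]].
    simpl in Hl. destruct Hl as [<-|[<-|[<-|[]]]]; simpl; f_equal; auto.
Qed.

Lemma monom_const c l : monom (fun _ => c) l = c ^ length l.
Proof. induction l; simpl; [ring | rewrite IHl; ring]. Qed.

Lemma term_le_sum_f_R0 (u : nat -> R) p :
  (forall k, 0 <= u k) -> u p <= sum_f_R0 u p.
Proof.
  intros Hu. destruct p as [|p]; simpl; [lra|].
  pose proof (cond_pos_sum u p Hu). lra.
Qed.

Lemma inner_is_C_self p (T U : tensor) :
  is_C p T U -> inner p U U = inner p T U.
Proof.
  intros [HU Horth]. pose proof (Horth U HU) as Hzero. unfold inner in *.
  replace (map (fun l => (T l - U l) * U l) (idx p))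
    with (map (fun l => T l * U l - U l * U l) (idx p)) in Hzero
    by (apply map_ext; intros; ring).
  rewrite sumR_sub in Hzero. lra.
Qed.

Definition l1norm (p : nat) (T : tensor) : R :=
  sumR (map (fun l => Rabs (T l)) (idx p)).

Lemma is_C_abs_le_l1norm p (T U : tensor) :
  is_C p T U -> forall l, valid_idx p l -> Rabs (U l) <= l1norm p T.
Proof.
  intros HC l Hl.
  set (N := inner p U U). set (S := l1norm p T).
  assert (HN : 0 <= N) by (apply sumR_ge0; intros; nra).
  assert (HS : 0 <= S) by (apply sumR_ge0; intros; apply Rabs_pos).
  assert (Hsup : forall l, In l (idx p) -> Rabs (U l) <= sqrt N).
  { intros l' Hin. rewrite <- sqrt_Rsqr_abs. apply sqrt_le_1_alt.
    apply (le_sumR_in (fun l => U l * U l)); auto. intros; nra. }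
  assert (HNS : N <= S * sqrt N).
  { unfold N at 1. rewrite (inner_is_C_self _ _ _ HC). unfold inner, S, l1norm.
    rewrite Rmult_comm, <- sumR_mull. apply sumR_le. intros l' Hin.
    apply Rle_trans with (Rabs (T l' * U l')); [apply Rle_abs|].
    rewrite Rabs_mult, (Rmult_comm (sqrt N)). apply Rmult_le_compat_l; [apply Rabs_pos | auto]. }
  assert (sqrt N <= S).
  { destruct (Req_dec N 0) as [E|E]; [rewrite E, sqrt_0; auto|].
    assert (0 < sqrt N) by (apply sqrt_lt_R0; lra).
    pose proof (sqrt_sqrt N HN). nra. }
  pose proof (Hsup l (valid_idx_in_idx _ _ Hl)). lra.
Qed.

Lemma abs_term_const (T : tensor) c p : 0 <= c ->
  abs_term T (fun _ => c) p = c ^ p / INR (fact p) * l1norm p T.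
Proof.
  intros Hc. unfold abs_term, l1norm. rewrite <- sumR_mull.
  f_equal. apply map_ext_in. intros l Hin.
  rewrite monom_const, (in_idx_length _ _ Hin), !Rabs_mult.
  assert (0 < INR (fact p)) by (apply lt_0_INR, lt_O_fact).
  rewrite Rabs_pos_eq by (left; apply Rinv_0_lt_compat; lra).
  rewrite (Rabs_pos_eq (c ^ p)) by (apply pow_le; lra).
  unfold Rdiv. ring.
Qed.

Definition Cauchy_estimate (M r : R) (T : tensor) : Prop :=
  forall p U, is_C p T U ->
    forall l, valid_idx p l -> Rabs (U l) <= M * INR (fact p) / r ^ p.

Lemma Cauchy_estimate_weaken M r M' r' T :
  0 <= M -> M <= M' -> 0 < r' -> r' <= r ->
  Cauchy_estimate M r T -> Cauchy_estimate M' r' T.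
Proof.
  intros HM HMM' Hr' Hr'r Hest p U HU l Hl.
  eapply Rle_trans; [exact (Hest p U HU l Hl)|].
  assert (0 < INR (fact p)) by (apply lt_0_INR, lt_O_fact).
  assert (0 < r' ^ p) by (apply pow_lt; lra).
  assert (r' ^ p <= r ^ p) by (apply pow_incr; lra).
  unfold Rdiv. apply Rmult_le_compat.
  - nra.
  - left; apply Rinv_0_lt_compat; lra.
  - apply Rmult_le_compat_r; lra.
  - apply Rinv_le_contravar; auto.
Qed.

Lemma abs_conv_near0_Cauchy_estimate (T : tensor) : abs_conv_near0 T ->
  exists M r, 0 < M /\ 0 < r /\ Cauchy_estimate M r T.
Proof.
  intros [rho [Hrho Hconv]].
  set (c := rho / 2). assert (Hc : 0 < c) by (unfold c; lra).
  destruct (Hconv (fun _ => c)) as [s Hs].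
  { intros. rewrite Rabs_pos_eq; unfold c; lra. }
  assert (Hterm : forall p, 0 <= abs_term T (fun _ => c) p).
  { intros. apply sumR_ge0. intros; apply Rabs_pos. }
  assert (Hle_s : forall p, abs_term T (fun _ => c) p <= s).
  { intros p. eapply Rle_trans; [apply term_le_sum_f_R0; exact Hterm|].
    exact (sum_incr _ p s Hs Hterm). }
  assert (Hs0 : 0 <= s) by (pose proof (Hle_s 0%nat); pose proof (Hterm 0%nat); lra).
  exists (s + 1), c. split; [lra|]. split; [lra|].
  apply (Cauchy_estimate_weaken s c); try lra.
  intros p U HU l Hl.
  eapply Rle_trans; [exact (is_C_abs_le_l1norm p T U HU l Hl)|].
  pose proof (Hle_s p) as Hp. rewrite abs_term_const in Hp by lra.
  assert (0 < INR (fact p)) by (apply lt_0_INR, lt_O_fact).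
  assert (0 < c ^ p) by (apply pow_lt; lra).
  unfold Rdiv in *. apply Rmult_le_reg_l with (c ^ p * / INR (fact p)).
  - apply Rmult_lt_0_compat; [lra | apply Rinv_0_lt_compat; lra].
  - replace (c ^ p * / INR (fact p) * (s * INR (fact p) * / c ^ p)) with s
      by (field; lra). lra.
Qed.

Lemma Cauchy_estimate_uniform n (T : nat -> tensor) :
  (forall alpha, (alpha < n)%nat ->
     exists M r, 0 < M /\ 0 < r /\ Cauchy_estimate M r (T alpha)) ->
  exists M r, 0 < M /\ 0 < r /\
    forall alpha, (alpha < n)%nat -> Cauchy_estimate M r (T alpha).
Proof.
  induction n as [|n IH]; intros Hest.
  - exists 1, 1. repeat split; try lra. intros; lia.
  - destruct IH as [M1 [r1 [HM1 [Hr1 Hest1]]]]; [intros; apply Hest; lia|].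
    destruct (Hest n) as [M2 [r2 [HM2 [Hr2 Hest2]]]]; [lia|].
    assert (Hr : 0 < Rmin r1 r2) by (apply Rmin_glb_lt; auto).
    exists (Rmax M1 M2), (Rmin r1 r2).
    split; [apply Rlt_le_trans with M1; [auto | apply Rmax_l]|].
    split; [exact Hr|].
    intros alpha Halpha. destruct (Nat.eq_dec alpha n) as [->|Hne].
    + apply (Cauchy_estimate_weaken M2 r2); auto using Rmax_r, Rmin_r; lra.
    + apply (Cauchy_estimate_weaken M1 r1); auto using Rmax_l, Rmin_l; [lra|].
      apply Hest1; lia.
Qed.

Theorem lemma2p2 (n : nat) (coef : nat -> tensor) :
  (forall alpha, (alpha < n)%nat -> abs_conv_near0 (coef alpha)) ->
  exists M r, 0 < M /\ 0 < r /\
    forall alpha p (U : tensor), (alpha < n)%nat ->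
      is_C p (coef alpha) U ->
      forall l, valid_idx p l -> Rabs (U l) <= M * INR (fact p) / r ^ p.
Proof.
  intros Hconv.
  destruct (Cauchy_estimate_uniform n coef) as [M [r [HM [Hr Hest]]]].
  { intros alpha Halpha. exact (abs_conv_near0_Cauchy_estimate _ (Hconv _ Halpha)). }
  exists M, r. split; [exact HM|]. split; [exact Hr|].
  intros alpha p U Halpha. exact (Hest alpha Halpha p U).
Qed.
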